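(* Let $n\ge2$ be an integer and $B(0,1)\subseteq\mathbb{R}^n$ the closed unit ball. If $A\subseteq B(0,1)$ is a Lusin set, then for every hyperplane $l$ tangent to $B(0,1)$, with $\pi:\mathbb{R}^n\to l$ the orthogonal projection, $\pi[A]$ is a Lusin set in $\pi[B(0,1)]$. The same holds with ''Lusin set'' replaced by ''Sierpiński set''.
   Context: A Lusin set in a Polish space $Y$ is an uncountable set $S\subseteq Y$ such that $S\cap M$ is countable for every meager $M\subseteq Y$. A Sierpiński set is an uncountable set $S$ such that $S\cap N$ is countable for every Lebesgue null set $N$. *)

(* R : realType, R^k is represented by 'rV[R]_k
   (its canonical topology is the product topology = Euclidean topology). *)
From HB Require Import structures.
From mathcomp Require Import all_boot all_order all_algebra.
From mathcomp Require Import all_classical all_reals all_analysis.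
Set Implicit Arguments. Unset Strict Implicit. Unset Printing Implicit Defensive.
Import Order.TTheory GRing.Theory Num.Theory.
Import numFieldNormedType.Exports.
Local Open Scope classical_set_scope.
Local Open Scope ring_scope.

Definition dotv (R : realType) (k : nat) (x y : 'rV[R]_k) : R :=
  \sum_(j < k) x 0 j * y 0 j.

Definition unit_ball (R : realType) (k : nat) : set 'rV[R]_k :=
  [set x | dotv x x <= 1].

Definition rel_closure (T : topologicalType) (Y M : set T) : set T :=
  closure M `&` Y.
Definition rel_interior (T : topologicalType) (Y C : set T) : set T :=
  [set y | Y y /\ exists U : set T, [/\ open U, U y & U `&` Y `<=` C]].
Definition nowhere_dense_in (T : topologicalType) (Y M : set T) : Prop :=
  M `<=` Y /\ rel_interior Y (rel_closure Y M) = set0.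
Definition meager_in (T : topologicalType) (Y M : set T) : Prop :=
  M `<=` Y /\ exists F : nat -> set T,
    (forall i, nowhere_dense_in Y (F i)) /\ M `<=` \bigcup_i F i.

Definition Lusin_in (T : topologicalType) (Y S : set T) : Prop :=
  [/\ S `<=` Y, ~ countable S &
      forall M : set T, meager_in Y M -> countable (S `&` M)].

Definition box (R : realType) (k : nat) (a b : 'rV[R]_k) : set 'rV[R]_k :=
  [set x | forall j, a 0 j <= x 0 j <= b 0 j].
Definition box_vol (R : realType) (k : nat) (a b : 'rV[R]_k) : R :=
  \prod_(j < k) (b 0 j - a 0 j).
Definition lebesgue_null (R : realType) (k : nat) (N : set 'rV[R]_k) : Prop :=
  forall eps : R, 0 < eps ->
    exists a b : nat -> 'rV[R]_k,
      [/\ forall i j, a i 0 j <= b i 0 j,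
          N `<=` \bigcup_i box (a i) (b i) &
          forall m, \sum_(i < m) box_vol (a i) (b i) < eps].

Definition Sierpinski_in (R : realType) (k : nat) (Y S : set 'rV[R]_k) : Prop :=
  [/\ S `<=` Y, ~ countable S &
      forall N : set 'rV[R]_k, lebesgue_null N -> countable (S `&` N)].

(* orthogonal projection of R^k onto the tangent hyperplane
   l_u = {x | <x,u> = 1} of the unit ball at the unit vector u *)
Definition tangent_proj (R : realType) (k : nat) (u : 'rV[R]_k) (x : 'rV[R]_k)
  : 'rV[R]_k := x + (1 - dotv x u) *: u.

(* An isometric parametrization of l_u by R^(k-1):  y |-> u + y Q,
   where the rows of Q are orthonormal and orthogonal to u. *)
Definition hyperplane_chart (R : realType) (k : nat) (u : 'rV[R]_k)
  (Q : 'M[R]_(k.-1, k)) (y : 'rV[R]_(k.-1)) : 'rV[R]_k := u + y *m Q.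

Definition orthonormal_frame (R : realType) (k : nat) (u : 'rV[R]_k)
  (Q : 'M[R]_(k.-1, k)) : Prop :=
  Q *m Q^T = 1%:M /\ Q *m u^T = 0.

(* In the coordinates y |-> u + y Q of the tangent hyperplane, the projection
   of the ball becomes the linear map x |-> x Q^T.  Its fibres through the ball
   are segments, hence nowhere dense in the ball and Lebesgue null.  Likewise,
   the trace on the ball of the preimage of a nowhere dense set is nowhere
   dense, because the map sends relatively open subsets of the ball onto sets
   with nonempty interior; and the trace on the slab |<x, u>| <= 1 of the
   preimage of a null set N is null, being a linear image of N x [-1, 1].
   Hence the projection of a set meeting every small set in a countable set
   meets every small set in a countable set, and it is uncountable since
   otherwise the set would be covered by countably many fibres. *)

From HB Require Import structures.
From mathcomp Require Import all_boot all_order all_algebra.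
From mathcomp Require Import all_classical all_reals all_analysis.
From mathcomp Require Import ring lra.
Set Implicit Arguments. Unset Strict Implicit. Unset Printing Implicit Defensive.
Import Order.TTheory GRing.Theory Num.Theory.
Import numFieldNormedType.Exports.
Local Open Scope classical_set_scope.
Local Open Scope ring_scope.

Section ImageOfSmallSets.
Variables (T U : Type) (g : T -> U) (Z A : set T).
Variable smallT : set T -> Prop.
Hypotheses (AZ : A `<=` Z) (A_small : forall M, smallT M -> countable (A `&` M)).

Lemma not_countable_image :
  (forall w, smallT (g @^-1` [set w] `&` Z)) -> ~ countable A -> ~ countable (g @` A).
Proof.
move=> fibre_small A_unc gA_cnt; apply: A_unc.
have : countable (\bigcup_(w in g @` A) (A `&` (g @^-1` [set w] `&` Z))).
  by apply: bigcup_countable => // w _; exact/A_small/fibre_small.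
apply/sub_countable/subset_card_le => x Ax.
by exists (g x); [exists x | split => //; split => //; exact: AZ].
Qed.

Lemma countable_image_setI M :
  smallT (g @^-1` M `&` Z) -> countable (g @` A `&` M).
Proof.
move=> /A_small/(sub_countable (card_image_le g _)).
apply/sub_countable/subset_card_le => _ [[x Ax <-] Mgx].
by exists x => //; split => //; split => //; exact: AZ.
Qed.

End ImageOfSmallSets.

Lemma nowhere_dense_meager (T : topologicalType) (Y M : set T) :
  nowhere_dense_in Y M -> meager_in Y M.
Proof. by move=> M_nd; split; [case: M_nd | exists (fun=> M); split => // x; exists 0%N]. Qed.

Section MatrixNorm.
Variable R : realType.

Lemma mx_norm_leP m n (A : 'M[R]_(m, n)) r :
  0 <= r -> `|A| <= r <-> forall i j, `|A i j| <= r.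
Proof.
move=> r0; have -> : `|A| = _ := mx_normrE A; split.
  by move/bigmax_leP => [_ hA] i j; exact: (hA (i, j)).
by move=> hA; apply/bigmax_leP; split => // -[i j] _; exact: hA.
Qed.

Lemma mx_norm_entry_le m n (A : 'M[R]_(m, n)) i j : `|A i j| <= `|A|.
Proof. by move: i j; apply/mx_norm_leP. Qed.

Lemma mx_norm_mulmx_le m k n (A : 'M[R]_(m, k)) (B : 'M[R]_(k, n)) :
  `|A *m B| <= k%:R * (`|A| * `|B|).
Proof.
apply/mx_norm_leP => [|i j]; first by rewrite !mulr_ge0.
have -> : k%:R * (`|A| * `|B|) = \sum_(l < k) `|A| * `|B|.
  by rewrite sumr_const card_ord mulr_natl.
rewrite mxE (le_trans (ler_norm_sum _ _ _)) // ler_sum // => l _; rewrite normrM.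
by apply: ler_pM; rewrite ?normr_ge0 ?mx_norm_entry_le.
Qed.

Lemma dotv_le_mx_norm k (v : 'rV[R]_k) : dotv v v <= k%:R * `|v| ^+ 2.
Proof.
have -> : k%:R * `|v| ^+ 2 = \sum_(j < k) `|v| ^+ 2.
  by rewrite sumr_const card_ord mulr_natl.
apply: ler_sum => j _.
rewrite -expr2 -real_normK ?num_real //.
by rewrite lerXn2r ?nnegrE ?normr_ge0 ?mx_norm_entry_le.
Qed.

Lemma unit_ball_mx_norm_le1 k (v : 'rV[R]_k) : unit_ball v -> `|v| <= 1.
Proof.
move=> v1; apply/mx_norm_leP => // i j; rewrite (ord1 i) -(@expr_le1 _ 2) //.
rewrite real_normK ?num_real // (le_trans _ v1) // /dotv (bigD1 j) //= expr2.
by rewrite lerDl sumr_ge0 // => l _; rewrite -expr2 sqr_ge0.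
Qed.

Lemma image_closure_lipschitz (V W : normedModType R) (f : V -> W) c S :
  (forall x y, `|f x - f y| <= c * `|x - y|) ->
  f @` closure S `<=` closure (f @` S).
Proof.
move=> lip _ [p Sp <-] B /nbhs_ballP [e /= e0 heB].
have c1 : 0 < `|c| + 1 by rewrite ltr_pwDr.
have [x [Sx]] := Sp _ (nbhsx_ballx p _ (divr_gt0 e0 c1)).
rewrite -ball_normE /= => px; exists (f x); split; first by exists x.
apply: heB; rewrite -ball_normE /= (le_lt_trans (lip _ _)) //.
apply: le_lt_trans (ler_wpM2r (normr_ge0 _) (ler_norm c)) _.
apply: le_lt_trans (ler_wpM2l (normr_ge0 c) (ltW px)) _.
by rewrite mulrA ltr_pdivrMr // mulrDr mulr1 mulrC ltrDl.
Qed.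

Lemma ball_not_sub_set1 k (v w : 'rV[R]_k) d :
  (0 < k)%N -> 0 < d -> ~ ball v d `<=` [set w].
Proof.
move=> k_gt0 d_gt0 vdw; have v_w : v = w := vdw _ (ballxx _ d_gt0).
have : v + const_mx (d / 2) = w.
  apply: vdw; rewrite -ball_normE /= opprD addrA subrr sub0r normrN.
  apply: le_lt_trans (_ : d / 2 < d); last lra.
  by apply/mx_norm_leP => [|i j]; [lra | rewrite mxE ger0_norm; lra].
by rewrite v_w => /(congr1 (fun x : 'rV[R]_k => x 0 (Ordinal k_gt0))); rewrite !mxE; lra.
Qed.

End MatrixNorm.

Section BlockConcatenation.
Variables (T : eqType) (x0 : T) (L : nat -> seq T).

(* The separator [x0] in front of every block makes [blocks m] at least [m]
   long, so [blocks_nth] enumerates all the blocks and its first [m] terms are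
   those of [blocks m]. *)
Definition blocks m := flatten [seq x0 :: L i | i <- iota 0 m].

Definition blocks_nth p := nth x0 (blocks p.+1) p.

Lemma blocks_prefix m m' : (m <= m')%N -> exists s, blocks m' = blocks m ++ s.
Proof.
move=> le_mm'; exists (flatten [seq x0 :: L i | i <- iota m (m' - m)]).
by rewrite /blocks -flatten_cat -map_cat -iotaD subnKC.
Qed.

Lemma size_blocks m : (m <= size (blocks m))%N.
Proof.
elim: m => [|m IHm] //; rewrite /blocks -addn1 iotaD map_cat flatten_cat size_cat.
by rewrite addn1 -(addn1 m) leq_add // size_cat addn0.
Qed.

Lemma blocks_nthE m p : (p < size (blocks m))%N -> blocks_nth p = nth x0 (blocks m) p.
Proof.
have nth_prefix m1 m2 : (m1 <= m2)%N -> (p < size (blocks m1))%N ->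
    nth x0 (blocks m2) p = nth x0 (blocks m1) p.
  by move=> /blocks_prefix [s ->] p_lt; rewrite nth_cat p_lt.
move=> p_lt; rewrite /blocks_nth -(nth_prefix p.+1 (maxn m p.+1)) ?leq_maxr //.
  by rewrite (nth_prefix m) ?leq_maxl.
exact: size_blocks.
Qed.

Lemma blocks_nth_onto i x : x \in L i -> exists p, blocks_nth p = x.
Proof.
move=> xL; have xS : x \in blocks i.+1.
  apply/flattenP; exists (x0 :: L i); last by rewrite inE xL orbT.
  by apply/mapP; exists i => //; rewrite mem_iota add0n ltnSn.
by exists (index x (blocks i.+1)); rewrite (blocks_nthE (m := i.+1)) ?index_mem ?nth_index.
Qed.

Lemma mem_blocks m x : x \in blocks m -> x = x0 \/ exists i, x \in L i.
Proof.
move=> /flattenP [_ /mapP [i _ ->]] /predU1P [->|xL]; [left | right] => //.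
by exists i.
Qed.

Lemma blocks_nth_cases p : blocks_nth p = x0 \/ exists i, blocks_nth p \in L i.
Proof.
rewrite /blocks_nth; case: (ltnP p (size (blocks p.+1))) => [p_lt|/(nth_default x0) ->].
  exact/mem_blocks/mem_nth.
by left.
Qed.

Lemma sum_blocks_nth_le (R : realDomainType) (F : T -> R) m :
  F x0 = 0 -> (forall i x, x \in L i -> 0 <= F x) ->
  \sum_(p < m) F (blocks_nth p) <= \sum_(i < m) \sum_(x <- L i) F x.
Proof.
move=> F0 FL; have size_m := size_blocks m.
rewrite (eq_bigr (fun p : 'I_m => F (nth x0 (blocks m) p))); last first.
  by move=> p _; rewrite (blocks_nthE (m := m)) // (leq_trans _ size_m).
have -> : \sum_(i < m) \sum_(x <- L i) F x = \sum_(x <- blocks m) F x.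
  rewrite /blocks big_flatten big_map.
  have -> : iota 0 m = index_iota 0 m by rewrite /index_iota subn0.
  rewrite big_mkord.
  by apply: eq_bigr => i _; rewrite big_cons /= F0 add0r.
rewrite (big_nth x0) -(big_mkord xpredT (fun p => F (nth x0 (blocks m) p))).
rewrite (@big_cat_nat _ _ _ m 0 (size (blocks m))) //=.
rewrite lerDl big_nat_cond sumr_ge0 // => p /andP [/andP [_ p_lt] _].
by have [->|[i /FL]] := mem_blocks (mem_nth x0 p_lt); rewrite ?F0.
Qed.

End BlockConcatenation.

Section CubeCovers.
Variables (R : realType) (k : nat).
Implicit Types (N : set 'rV[R]_k) (c : 'rV[R]_k) (r : R).

Definition cube c r : set 'rV[R]_k := [set x | `|x - c| <= r].

Lemma cube_box c r : 0 <= r -> cube c r = box (c - const_mx r) (c + const_mx r).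
Proof.
move=> r0; apply/seteqP; split => x /=.
  move/mx_norm_leP => /(_ r0) xc j; have := xc 0 j; rewrite !mxE ler_norml; lra.
move=> xc; apply/mx_norm_leP => // i j; rewrite (ord1 i) !mxE ler_norml.
by have := xc j; rewrite !mxE; lra.
Qed.

Lemma box_vol_cube c r : box_vol (c - const_mx r) (c + const_mx r) = (2 * r) ^+ k.
Proof.
rewrite /box_vol (eq_bigr (fun=> 2 * r)) ?prodr_const ?card_ord // => j _.
by rewrite !mxE; ring.
Qed.

Hypothesis k_gt0 : (0 < k)%N.

Lemma lebesgue_null_cube_covers N :
  (forall eps, 0 < eps -> exists (c : nat -> seq 'rV[R]_k) (r : nat -> R),
    [/\ forall i, 0 <= r i,
        N `<=` \bigcup_i \bigcup_(x in [set` c i]) cube x (r i) &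
        forall m, \sum_(i < m) (size (c i))%:R * (2 * r i) ^+ k <= eps]) ->
  lebesgue_null N.
Proof.
move=> covers eps eps_gt0.
have [c [r [r_ge0 Ncover sum_le]]] := covers (eps / 2) (divr_gt0 eps_gt0 (ltr0Sn _ 1)).
pose L i := [seq (x, r i) | x <- c i].
pose q p := blocks_nth (0, 0) L p.
have q_ge0 p : 0 <= (q p).2.
  by rewrite /q; have [->|[i /mapP [x _ ->]]] := blocks_nth_cases (0, 0) L p; rewrite /= ?r_ge0.
exists (fun p => (q p).1 - const_mx (q p).2), (fun p => (q p).1 + const_mx (q p).2).
split => [p j|x /Ncover [i _ [y yc xy]]|m].
- by rewrite !mxE; have := q_ge0 p; lra.
- have [p qp] := @blocks_nth_onto _ (0, 0) L i _ (map_f (fun y => (y, r i)) yc).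
  by exists p => //; rewrite -cube_box // /q qp.
- rewrite (eq_bigr (fun p : 'I_m => (2 * (q p).2) ^+ k)) => [|p _]; last first.
    exact: box_vol_cube.
  rewrite /q; apply: le_lt_trans
    (@sum_blocks_nth_le _ (0, 0) L _ (fun x => (2 * x.2) ^+ k) m _ _) _.
  + (* the separator cube (0, 0) has volume 0 ^+ k = 0 because k > 0 *)
    by rewrite /= mulr0 expr0n gtn_eqF.
  + by move=> i _ /mapP [y _ ->] /=; rewrite exprn_ge0 // mulr_ge0.
  rewrite (eq_bigr (fun i : 'I_m => (size (c i))%:R * (2 * r i) ^+ k)) => [|i _].
    by apply: le_lt_trans (sum_le m) _; lra.
  by rewrite big_map /= big_const_seq count_predT iter_addr_0 [RHS]mulr_natl.
Qed.

End CubeCovers.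

Section BoxGrid.
Variables (R : realType) (k : nat).

Lemma card_dffun_ord (N : 'I_k -> nat) :
  #|{dffun forall j : 'I_k, 'I_(N j)}| = (\prod_j N j)%N.
Proof.
rewrite card_dep_ffun foldrE big_map big_enum /=.
by apply: eq_bigr => j _; rewrite card_ord.
Qed.

Lemma dist_grid_center_le (y h : R) : 0 < h -> 0 <= y ->
  `|y - (2 * (Num.truncn (y / (2 * h)))%:R + 1) * h| <= h.
Proof.
move=> h_gt0 y_ge0; have h2_gt0 : 0 < 2 * h by rewrite mulr_gt0.
have /andP [] := truncn_itv (divr_ge0 y_ge0 (ltW h2_gt0)).
set t := (Num.truncn _)%:R; rewrite -[_.+1]addn1 natrD -/t.
rewrite ler_pdivlMr ?ltr_pdivrMr // => t_le y_lt.
by rewrite ler_norml; apply/andP; split; nra.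
Qed.

Lemma box_sub_grid_cubes (a b : 'rV[R]_k) h : 0 < h -> (forall j, a 0 j <= b 0 j) ->
  exists s : seq 'rV[R]_k, box a b `<=` \bigcup_(c in [set` s]) cube c h /\
    (size s)%:R * (2 * h) ^+ k <= \prod_j (b 0 j - a 0 j + 2 * h).
Proof.
move=> h_gt0 ab; have h2_gt0 : 0 < 2 * h by rewrite mulr_gt0.
pose N j := (Num.truncn ((b 0 j - a 0 j) / (2 * h))).+1.
pose center (f : {dffun forall j : 'I_k, 'I_(N j)}) : 'rV[R]_k :=
  \row_j (a 0 j + (2 * (f j)%:R + 1) * h).
exists [seq center f | f <- enum {dffun forall j : 'I_k, 'I_(N j)}]; split.
- move=> x xab; pose t j := Num.truncn ((x 0 j - a 0 j) / (2 * h)).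
  have t_lt j : (t j < N j)%N.
    rewrite /N ltnS; apply: le_truncn; rewrite ler_pM2r ?invr_gt0 //.
    by have /andP [] := xab j; lra.
  pose f : {dffun forall j : 'I_k, 'I_(N j)} := [ffun j => Ordinal (t_lt j)].
  exists (center f); first by apply/mapP; exists f; rewrite ?mem_enum.
  apply/mx_norm_leP => [|i j]; first exact: ltW.
  rewrite (ord1 i) !mxE ffunE /= opprD addrA.
  by apply: dist_grid_center_le => //; have /andP [] := xab j; lra.
- rewrite size_map -cardE card_dffun_ord natr_prod mulrC -[k in _ ^+ k]card_ord -prodrMl.
  apply: ler_prod => j _; apply/andP; split; first by rewrite mulr_ge0 ?ltW.
  have L_ge0 : 0 <= b 0 j - a 0 j by rewrite subr_ge0.
  have /andP [+ _] := truncn_itv (divr_ge0 L_ge0 (ltW h2_gt0)).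
  have -> : (N j)%:R = (Num.truncn ((b 0 j - a 0 j) / (2 * h)))%:R + 1 :> R.
    by rewrite natr1.
  by rewrite ler_pdivlMr //; nra.
Qed.

End BoxGrid.

Lemma prod_addr_le (R : realDomainType) (I : Type) (r : seq I) (f : I -> R) x :
  (forall i, 0 <= f i) -> 0 <= x <= 1 ->
  \prod_(j <- r) (f j + x) <= \prod_(j <- r) f j + x * \prod_(j <- r) (f j + 2).
Proof.
move=> f_ge0 /andP [x_ge0 x_le1]; elim: r => [|a r IHr]; first by rewrite !big_nil; lra.
rewrite !big_cons.
set A := \prod_(j <- r) (f j + x) in IHr *.
set P := \prod_(j <- r) f j in IHr *.
set P2 := \prod_(j <- r) (f j + 2) in IHr *.
have P_ge0 : 0 <= P by apply: prodr_ge0.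
have A_ge0 : 0 <= A by apply: prodr_ge0 => i _; rewrite addr_ge0.
have P_le : P <= P2 by apply: ler_prod => i _; rewrite f_ge0 lerDl ler0n.
have fa_ge0 := f_ge0 a.
have : (f a + x) * A <= (f a + x) * (P + x * P2) by rewrite ler_wpM2l ?addr_ge0.
have : x * P <= x * P2 by rewrite ler_wpM2l.
have : x * (x * P2) <= x * P2 by rewrite ler_piMl ?mulr_ge0 // (le_trans P_ge0).
nra.
Qed.

Lemma sum_inv_pow2_le1 (R : realFieldType) m : \sum_(i < m) (2 ^+ i.+1 : R)^-1 <= 1.
Proof.
suff -> : \sum_(i < m) (2 ^+ i.+1 : R)^-1 = 1 - (2 ^+ m)^-1.
  by rewrite lerBlDr lerDl invr_ge0 exprn_ge0.
elim: m => [|m IHm]; first by rewrite big_ord0 expr0 invr1 subrr.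
rewrite big_ord_recr /= IHm exprS.
have : (2 ^+ m : R) != 0 by rewrite expf_neq0 // pnatr_eq0.
by move=> ?; field.
Qed.

Section LipschitzImage.
Variable R : realType.

Lemma box_sub_cubes_vol k (a b : 'rV[R]_k) delta :
  0 < delta -> (forall j, a 0 j <= b 0 j) ->
  exists (h : R) (s : seq 'rV[R]_k), [/\ 0 < h,
    box a b `<=` \bigcup_(c in [set` s]) cube c h &
    (size s)%:R * (2 * h) ^+ k <= box_vol a b + delta].
Proof.
move=> delta_gt0 ab; pose P2 := \prod_j (b 0 j - a 0 j + 2).
have P2_gt0 : 0 < P2 by apply: prodr_gt0 => j _; have := ab j; lra.
pose h := Num.min 2^-1 (delta / (2 * P2)).
have h_gt0 : 0 < h by rewrite lt_min invr_gt0 ltr0n /= divr_gt0 ?mulr_gt0.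
have h_le : 2 * h <= 1.
  have : h <= 2^-1 by rewrite ge_min lexx.
  lra.
have hP2_le : 2 * h * P2 <= delta.
  have : h <= delta / (2 * P2) by rewrite ge_min lexx orbT.
  by rewrite ler_pdivlMr ?mulr_gt0 // mulrA [h * 2]mulrC.
have [s [cover size_le]] := box_sub_grid_cubes h_gt0 ab.
exists h, s; split => //; apply: le_trans size_le _.
have prod_le := prod_addr_le (index_enum 'I_k) (f := fun j => b 0 j - a 0 j) (x := 2 * h).
apply: le_trans (prod_le _ _) _.
- by move=> j; rewrite subr_ge0.
- by rewrite h_le andbT mulr_ge0 // ltW.
by rewrite /box_vol lerD2l.
Qed.

Lemma lebesgue_null_lipschitz_image k k' (f : 'rV[R]_k -> 'rV[R]_k') (C : R) N :
  k = k' -> (0 < k')%N -> 0 <= C -> (forall x y, `|f x - f y| <= C * `|x - y|) ->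
  lebesgue_null N -> lebesgue_null (f @` N).
Proof.
move=> kk' k'_gt0 C_ge0 f_lip N_null; subst k'.
(* Box [i] is split into cubes of radius [h] with excess volume eps' / 2 ^+ i.+1,
   and [f] maps each of them into a cube of radius [C * h]. *)
apply: lebesgue_null_cube_covers => // eps eps_gt0.
have Ck_gt0 : 0 < C ^+ k + 1 by rewrite ltr_wpDl ?exprn_ge0.
pose eps' := eps / (2 * (C ^+ k + 1)).
have eps'_gt0 : 0 < eps' by rewrite divr_gt0 ?mulr_gt0.
have [a [b [ab Ncover vol_lt]]] := N_null _ eps'_gt0.
have /choice [hs hs_cover] i : exists hs : R * seq 'rV[R]_k, [/\ 0 < hs.1,
    box (a i) (b i) `<=` \bigcup_(c in [set` hs.2]) cube c hs.1 &
    (size hs.2)%:R * (2 * hs.1) ^+ k <= box_vol (a i) (b i) + eps' / 2 ^+ i.+1].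
  have delta_gt0 : 0 < eps' / 2 ^+ i.+1 by rewrite divr_gt0 ?exprn_gt0.
  by have [h [s]] := box_sub_cubes_vol delta_gt0 (ab i); exists (h, s).
exists (fun i => [seq f c | c <- (hs i).2]), (fun i => C * (hs i).1).
have [h_gt0 cover vol_le] := all_and3 hs_cover.
split => [i|_ [y /Ncover [i _ /cover [c cs yc]] <-]|m].
- by rewrite mulr_ge0 // ltW.
- exists i => //; exists (f c); first exact: map_f.
  by rewrite /cube /= (le_trans (f_lip _ _)) // ler_wpM2l.
rewrite (eq_bigr (fun i : 'I_m => C ^+ k * ((size (hs i).2)%:R * (2 * (hs i).1) ^+ k)))
  => [|i _]; last by rewrite size_map mulrCA exprMn mulrCA.
have sum_le : \sum_(i < m) (size (hs i).2)%:R * (2 * (hs i).1) ^+ k <= 2 * eps'.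
  apply: le_trans (ler_sum _ (fun (i : 'I_m) _ => vol_le i)) _.
  rewrite big_split /= -mulr_sumr.
  have := ler_wpM2l (ltW eps'_gt0) (sum_inv_pow2_le1 R m); have := vol_lt m; lra.
rewrite -mulr_sumr (le_trans (ler_wpM2l (exprn_ge0 k C_ge0) sum_le)) //.
have -> : 2 * eps' = eps / (C ^+ k + 1) by rewrite /eps'; field; rewrite gt_eqF.
by rewrite mulrA ler_pdivrMr // mulrC ler_pM2l // lerDl.
Qed.

End LipschitzImage.

Section NullSets.
Variable R : realType.

Lemma lebesgue_nullS k (A B : set 'rV[R]_k) : A `<=` B -> lebesgue_null B -> lebesgue_null A.
Proof.
move=> AB B_null eps eps_gt0; have [a [b [ab Bcover vol_lt]]] := B_null eps eps_gt0.
by exists a, b; split => // x /AB /Bcover.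
Qed.

Lemma box_vol_row_mx k1 k2 (a b : 'rV[R]_k1) (a' b' : 'rV[R]_k2) :
  box_vol (row_mx a a') (row_mx b b') = box_vol a b * box_vol a' b'.
Proof.
by rewrite /box_vol big_split_ord; congr (_ * _); apply: eq_bigr => j _;
  rewrite ?row_mxEl ?row_mxEr.
Qed.

Lemma box_row_mx k1 k2 (a b x : 'rV[R]_k1) (a' b' y : 'rV[R]_k2) :
  box a b x -> box a' b' y -> box (row_mx a a') (row_mx b b') (row_mx x y).
Proof.
move=> xab yab j; rewrite -(splitK j).
by case: (fintype.split j) => j' /=; rewrite ?row_mxEl ?row_mxEr.
Qed.

Lemma lebesgue_null_row_mx_box k1 k2 (N : set 'rV[R]_k1) (a b : 'rV[R]_k2) :
  (forall j, a 0 j <= b 0 j) -> lebesgue_null N ->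
  lebesgue_null [set row_mx x y | x in N & y in box a b].
Proof.
move=> ab N_null eps eps_gt0.
have V_ge0 : 0 <= box_vol a b by apply: prodr_ge0 => j _; rewrite subr_ge0.
have eps'_gt0 : 0 < eps / (box_vol a b + 1) by rewrite divr_gt0 ?ltr_wpDl.
have [a' [b' [ab' cover vol_lt]]] := N_null _ eps'_gt0.
exists (fun i => row_mx (a' i) a), (fun i => row_mx (b' i) b); split.
- move=> i j; rewrite -(splitK j).
  by case: (fintype.split j) => j' /=; rewrite ?row_mxEl ?row_mxEr.
- by move=> _ [x /cover [i _ xi] [y yab <-]]; exists i => //; exact: box_row_mx.
move=> m; rewrite (eq_bigr _ (fun i _ => box_vol_row_mx _ _ _ _)) -mulr_suml.
apply: le_lt_trans (ler_wpM2r V_ge0 (ltW (vol_lt m))) _.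
rewrite mulrAC ltr_pdivrMr ?ltr_wpDl //; nra.
Qed.

Lemma lebesgue_null_set1 k (w : 'rV[R]_k) : (0 < k)%N -> lebesgue_null [set w].
Proof.
move=> k_gt0 eps eps_gt0; exists (fun=> w), (fun=> w); split => // [x ->|m].
  by exists 0%N => // j; rewrite lexx.
rewrite big1 // => i _; rewrite /box_vol (eq_bigr (fun=> 0)) => [|j _]; last exact: subrr.
by rewrite prodr_const card_ord expr0n gtn_eqF.
Qed.

End NullSets.

Section UnitBall.
Variables (R : realType) (k : nat).
Implicit Types (x y v : 'rV[R]_k).

Lemma dotvE x y : dotv x y = (x *m y^T) 0 0.
Proof. by rewrite /dotv mxE; apply: eq_bigr => j _; rewrite mxE. Qed.

Lemma dotvZ (c : R) v : dotv (c *: v) (c *: v) = c ^+ 2 * dotv v v.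
Proof. by rewrite /dotv mulr_sumr; apply: eq_bigr => j _; rewrite !mxE; ring. Qed.

Lemma dotv_ge0 v : 0 <= dotv v v.
Proof. by rewrite sumr_ge0 // => j _; rewrite -expr2 sqr_ge0. Qed.

Lemma unit_ball_convex x y t : 0 <= t <= 1 ->
  unit_ball x -> unit_ball y -> unit_ball (t *: x + (1 - t) *: y).
Proof.
rewrite /unit_ball /= => /andP [t_ge0 t_le1] Bx By.
apply: (@le_trans _ _ (t * dotv x x + (1 - t) * dotv y y)); last first.
  have : 0 <= 1 - t by lra.
  nra.
rewrite /dotv !mulr_sumr -big_split /=; apply: ler_sum => j _; rewrite !mxE.
have : 0 <= t * (1 - t) * (x 0 j - y 0 j) ^+ 2.
  by rewrite mulr_ge0 ?sqr_ge0 // mulr_ge0 // subr_ge0.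
nra.
Qed.

Lemma unit_ball_shrinkD y v t : 0 < t <= 1 -> dotv v v <= t ^+ 2 ->
  unit_ball y -> unit_ball ((1 - t) *: y + v).
Proof.
move=> /andP [t_gt0 t_le1] vt By.
have -> : (1 - t) *: y + v = (1 - t) *: y + (1 - (1 - t)) *: (t^-1 *: v).
  by rewrite subKr scalerA mulfV ?scale1r ?gt_eqF.
apply: unit_ball_convex => //; first by apply/andP; split; lra.
by rewrite /unit_ball /= dotvZ exprVn ler_pdivrMl ?exprn_gt0 // mulr1.
Qed.

End UnitBall.

Section TangentFrame.
Variables (R : realType) (n : nat) (u : 'rV[R]_n) (Q : 'M[R]_(n.-1, n)).
Hypotheses (n_ge2 : (2 <= n)%N) (u_unit : dotv u u = 1).
Hypotheses (QQ : Q *m Q^T = 1%:M) (Qu : Q *m u^T = 0).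

Definition frame_coord (x : 'rV[R]_n) : 'rV[R]_(n.-1) := x *m Q^T.

Let n_gt0 : 0 < n%:R :> R. Proof. by rewrite ltr0n (ltnW n_ge2). Qed.

Let n_pred_gt0 : (0 < n.-1)%N. Proof. by rewrite -ltnS prednK // ltnW. Qed.

Let n_pred_lt : (n.-1)%:R < n%:R :> R.
Proof. by rewrite ltr_nat ltn_predL (ltnW n_ge2). Qed.

Let uQ : u *m Q^T = 0. Proof. by rewrite -[LHS]trmxK trmx_mul trmxK Qu trmx0. Qed.

(* The square matrix [col_mx Q u] has orthonormal rows, so its columns are
   orthonormal as well. *)
Lemma frame_complete : Q^T *m Q + u^T *m u = 1%:M.
Proof.
pose M := col_mx Q u.
have uu : u *m u^T = 1%:M.
  by apply/matrixP => i j; rewrite !ord1 -dotvE u_unit mxE.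
have MM : M *m M^T = 1%:M.
  by rewrite /M tr_col_mx mul_col_row QQ Qu uQ uu -scalar_mx_block.
have /row_fullP [B BM] : row_full M.
  rewrite /row_full eqn_leq rank_leq_col /=.
  have := mxrankM_maxl M M^T; rewrite MM mxrank1; apply: leq_trans.
  by rewrite addn1 prednK // ltnW.
have MMM : M *m (M^T *m M) = M by rewrite mulmxA MM mul1mx.
have : B *m M *m (M^T *m M) = B *m M by rewrite -mulmxA MMM.
by rewrite BM mul1mx /M tr_col_mx mul_row_col.
Qed.

Lemma frame_coordD x z : frame_coord (x + z *m Q) = frame_coord x + z.
Proof. by rewrite /frame_coord mulmxDl -mulmxA QQ mulmx1. Qed.

Lemma frame_decomp x : x = frame_coord x *m Q + dotv x u *: u.
Proof.
rewrite -{1}[x]mulmx1 -frame_complete mulmxDr !mulmxA /frame_coord; congr (_ + _).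
by rewrite [x *m u^T]mx11_scalar mul_scalar_mx dotvE.
Qed.

Lemma frame_coord_tangent_proj x : frame_coord (tangent_proj u x) = frame_coord x.
Proof. by rewrite /frame_coord mulmxDl -scalemxAl uQ scaler0 addr0. Qed.

Lemma chart_frame_coord x : hyperplane_chart u Q (frame_coord x) = tangent_proj u x.
Proof.
rewrite /hyperplane_chart /tangent_proj [X in _ = X + _]frame_decomp scalerBl scale1r.
by rewrite -addrA (addrC (dotv x u *: u)) subrK addrC.
Qed.

Lemma preimage_chart_tangent_proj (S : set 'rV[R]_n) :
  hyperplane_chart u Q @^-1` (tangent_proj u @` S) = frame_coord @` S.
Proof.
apply/seteqP; split => y.
  move=> [x Sx chart_y]; exists x => //.
  by rewrite -frame_coord_tangent_proj chart_y frame_coordD /frame_coord uQ add0r.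
by move=> [x Sx <-]; exists x; rewrite ?chart_frame_coord.
Qed.

Lemma dotv_mulmx_frame z : dotv (z *m Q) (z *m Q) = dotv z z.
Proof. by rewrite !dotvE trmx_mul mulmxA -(mulmxA z) QQ mulmx1. Qed.

Lemma dotv_frame_decomp x :
  dotv x x = dotv (frame_coord x) (frame_coord x) + dotv x u ^+ 2.
Proof.
rewrite !dotvE.
have -> : x *m x^T = x *m (Q^T *m Q + u^T *m u) *m x^T by rewrite frame_complete mulmx1.
rewrite mulmxDr mulmxDl mxE; congr (_ + _).
  by rewrite /frame_coord trmx_mul trmxK !mulmxA.
rewrite !mulmxA -mulmxA -[u *m x^T]trmxK trmx_mul !trmxK.
by rewrite mxE big_ord1 [_^T _ _]mxE expr2.
Qed.

Lemma mx_norm_frame_le1 : `|Q| <= 1.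
Proof.
apply/mx_norm_leP => // i j.
have := mx_norm_entry_le (row i Q) 0 j; rewrite mxE => /le_trans; apply.
apply: unit_ball_mx_norm_le1; rewrite /unit_ball /= /dotv.
have := congr1 (fun M : 'M[R]_(n.-1, n.-1) => M i i) QQ; rewrite !mxE eqxx mulr1n => <-.
by rewrite le_eqVlt; apply/orP; left; apply/eqP/eq_bigr => l _; rewrite !mxE.
Qed.

Lemma unit_ball_dotv_le1 x : unit_ball x -> `|dotv x u| <= 1.
Proof.
move=> Bx; rewrite -(@expr_le1 _ 2) // real_normK ?num_real //.
move: Bx; rewrite /unit_ball /= dotv_frame_decomp.
by have := dotv_ge0 (frame_coord x); lra.
Qed.

Lemma frame_coord_lipschitz x y :
  `|frame_coord x - frame_coord y| <= n%:R * `|Q^T| * `|x - y|.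
Proof.
rewrite /frame_coord -mulmxBl (le_trans (mx_norm_mulmx_le _ _)) //.
by rewrite mulrAC mulrA.
Qed.

Lemma lebesgue_null_frame_slab (N : set 'rV[R]_n.-1) : lebesgue_null N ->
  lebesgue_null (frame_coord @^-1` N `&` [set x | `|dotv x u| <= 1]).
Proof.
move=> N_null; pose M := col_mx Q u.
(* The slab over [N] is the image of N x [-1, 1] under y |-> y *m M. *)
have M_lip (y y' : 'rV[R]_(n.-1 + 1)) :
    `|y *m M - y' *m M| <= (n.-1 + 1)%:R * `|M| * `|y - y'|.
  by rewrite -mulmxBl (le_trans (mx_norm_mulmx_le _ _)) // mulrAC mulrA.
have unit_seg j : (const_mx (-1) : 'rV[R]_1) 0 j <= (const_mx 1 : 'rV[R]_1) 0 j.
  by rewrite !mxE; lra.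
have n_eq : (n.-1 + 1)%N = n by rewrite addn1 prednK // ltnW.
have := lebesgue_null_lipschitz_image n_eq (ltnW n_ge2) _ M_lip
  (lebesgue_null_row_mx_box unit_seg N_null).
move=> /(_ (mulr_ge0 (ler0n _ _) (normr_ge0 _))); apply: lebesgue_nullS.
move=> x [Nx ux]; exists (row_mx (frame_coord x) (dotv x u)%:M).
  exists (frame_coord x) => //; exists (dotv x u)%:M => // j.
  by rewrite (ord1 j) !mxE eqxx mulr1n -ler_norml.
by rewrite mul_row_col mul_scalar_mx -frame_decomp.
Qed.

Lemma mx_norm_mulmx_frame_le (z : 'rV[R]_n.-1) : `|z *m Q| <= (n.-1)%:R * `|z|.
Proof.
apply: le_trans (mx_norm_mulmx_le _ _) _; apply: ler_wpM2l => //.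
exact/ler_piMr/mx_norm_frame_le1.
Qed.

Lemma unit_ball_frame_shift y t (z : 'rV[R]_n.-1) : unit_ball y -> 0 < t <= 1 ->
  `|z| <= t / n%:R -> unit_ball ((1 - t) *: y + z *m Q).
Proof.
move=> By t01 zt; apply: unit_ball_shrinkD => //; rewrite dotv_mulmx_frame.
have /andP [t_gt0 _] := t01.
apply: le_trans (dotv_le_mx_norm z) _.
move: zt; rewrite ler_pdivlMr // => zt.
have n_pred_le : (n.-1)%:R <= n%:R ^+ 2 :> R.
  have : 1 <= n%:R :> R by rewrite ler1n (ltnW n_ge2).
  have := n_pred_lt; nra.
apply: le_trans (_ : (`|z| * n%:R) ^+ 2 <= _).
  by rewrite exprMn mulrC ler_wpM2l ?sqr_ge0.
by rewrite lerXn2r ?nnegrE ?(ltW t_gt0) ?mulr_ge0.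
Qed.

Lemma frame_shift_near y t (z : 'rV[R]_n.-1) : unit_ball y -> 0 <= t ->
  `|z| <= t / n%:R -> `|y - ((1 - t) *: y + z *m Q)| <= 2 * t.
Proof.
move=> By t_ge0; rewrite ler_pdivlMr // => zt.
have -> : y - ((1 - t) *: y + z *m Q) = t *: y - z *m Q.
  by apply/rowP => j; rewrite !mxE; ring.
apply: le_trans (ler_normB _ _) _; rewrite normrZ ger0_norm //.
have ty_le : t * `|y| <= t by rewrite ler_piMr ?unit_ball_mx_norm_le1.
have zQ_le : `|z *m Q| <= t.
  apply: le_trans (mx_norm_mulmx_frame_le z) (le_trans _ zt).
  by rewrite mulrC ler_wpM2l ?(ltW n_pred_lt).
lra.
Qed.

Lemma ball_sub_frame_coord_image (y : 'rV[R]_n) (U : set 'rV[R]_n) :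
  unit_ball y -> open U -> U y ->
  exists w d, 0 < d /\ ball w d `<=` frame_coord @` (U `&` @unit_ball R n).
Proof.
move=> By oU Uy; have /nbhs_ballP [e /= e_gt0 eU] : nbhs y U by apply: open_nbhs_nbhs.
(* (1 - t) y is an interior point of the ball close to y; moving it along the
   rows of Q by less than t / n stays in U and in the ball. *)
pose t := Num.min (e / 4) 1.
have t_gt0 : 0 < t by rewrite lt_min ltr01 andbT divr_gt0.
have t_le1 : t <= 1 by rewrite ge_min lexx orbT.
have t_le : t <= e / 4 by rewrite ge_min lexx.
exists (frame_coord ((1 - t) *: y)), (t / n%:R); split; first by rewrite divr_gt0.
move=> w; rewrite -ball_normE /= distrC => /ltW z_le.
exists ((1 - t) *: y + (w - frame_coord ((1 - t) *: y)) *m Q).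
  split; last by apply: unit_ball_frame_shift => //; rewrite t_gt0.
  apply: eU; rewrite -ball_normE /=.
  by apply: le_lt_trans (frame_shift_near By (ltW t_gt0) z_le) _; lra.
by rewrite frame_coordD addrC subrK.
Qed.

Lemma nowhere_dense_frame_preimage (F : set 'rV[R]_n.-1) :
  (forall w d, 0 < d -> ball w d `<=` frame_coord @` @unit_ball R n ->
    ~ ball w d `<=` closure F) ->
  rel_interior (@unit_ball R n)
    (rel_closure (@unit_ball R n) (frame_coord @^-1` F `&` @unit_ball R n)) = set0.
Proof.
move=> F_small; apply/seteqP; split => // y [By [U [oU Uy UB]]].
have [w [d [d_gt0 wd]]] := ball_sub_frame_coord_image By oU Uy.
apply: (F_small w d d_gt0) => [v /wd [x [_ Bx] <-]|v /wd [x UBx <-]]; first by exists x.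
have [x_cl _] := UB x UBx.
have := image_closure_lipschitz frame_coord_lipschitz (ex_intro2 _ _ x x_cl erefl).
by apply: closureS => _ [x' [Fx' _] <-].
Qed.

Lemma nowhere_dense_frame_fibre w :
  nowhere_dense_in (@unit_ball R n) (frame_coord @^-1` [set w] `&` @unit_ball R n).
Proof.
split => [x [] //|]; apply: nowhere_dense_frame_preimage => v d d_gt0 _.
rewrite -(closure_id _).1.
  exact: ball_not_sub_set1 n_pred_gt0 d_gt0.
exact/accessible_closed_set1/hausdorff_accessible/norm_hausdorff.
Qed.

Lemma meager_frame_preimage M : meager_in (frame_coord @` @unit_ball R n) M ->
  meager_in (@unit_ball R n) (frame_coord @^-1` M `&` @unit_ball R n).
Proof.
move=> [_ [F [F_nd MF]]]; split => [x [] //|].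
exists (fun i => frame_coord @^-1` F i `&` @unit_ball R n).
split => [i|x [/MF [i _ Fx] Bx]]; last by exists i.
split => [x [] //|]; apply: nowhere_dense_frame_preimage => w d d_gt0 wdY wdF.
have [_ F_int] := F_nd i.
suff : rel_interior (frame_coord @` @unit_ball R n)
    (rel_closure (frame_coord @` @unit_ball R n) (F i)) w by rewrite F_int.
split; first exact/wdY/ballxx.
exists (ball w d); split => [|//|v [wv _]]; first exact: ball_open.
  exact: ballxx.
by split; [exact: wdF | exact: wdY].
Qed.

Lemma Lusin_frame_coord (A : set 'rV[R]_n) : A `<=` @unit_ball R n ->
  Lusin_in (@unit_ball R n) A ->
  Lusin_in (frame_coord @` @unit_ball R n) (frame_coord @` A).
Proof.
move=> AB [_ A_unc A_small]; split; first exact: image_subset.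
  apply: not_countable_image AB A_small _ A_unc => w.
  exact/nowhere_dense_meager/nowhere_dense_frame_fibre.
by move=> M /meager_frame_preimage; exact: countable_image_setI.
Qed.

Lemma Sierpinski_frame_coord (A : set 'rV[R]_n) : A `<=` @unit_ball R n ->
  Sierpinski_in (@unit_ball R n) A ->
  Sierpinski_in (frame_coord @` @unit_ball R n) (frame_coord @` A).
Proof.
move=> AB [_ A_unc A_small].
have A_slab : A `<=` [set x | `|dotv x u| <= 1] by move=> x /AB/unit_ball_dotv_le1.
split; first exact: image_subset.
  apply: not_countable_image A_slab A_small _ A_unc => w.
  exact/lebesgue_null_frame_slab/lebesgue_null_set1/n_pred_gt0.
by move=> N /lebesgue_null_frame_slab; exact: countable_image_setI.
Qed.

End TangentFrame.

Theorem mainTheorem9 (R : realType) (n : nat) (hn : (2 <= n)%N)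
    (A : set 'rV[R]_n) (hA : A `<=` @unit_ball R n) :
  (Lusin_in (@unit_ball R n) A ->
    forall (u : 'rV[R]_n) (Q : 'M[R]_(n.-1, n)),
      dotv u u = 1 -> orthonormal_frame u Q ->
      Lusin_in (hyperplane_chart u Q @^-1` (tangent_proj u @` @unit_ball R n))
               (hyperplane_chart u Q @^-1` (tangent_proj u @` A))) /\
  (Sierpinski_in (@unit_ball R n) A ->
    forall (u : 'rV[R]_n) (Q : 'M[R]_(n.-1, n)),
      dotv u u = 1 -> orthonormal_frame u Q ->
      Sierpinski_in (hyperplane_chart u Q @^-1` (tangent_proj u @` @unit_ball R n))
                    (hyperplane_chart u Q @^-1` (tangent_proj u @` A))).
Proof.
split=> [A_Lusin|A_Sierpinski] u Q u_unit [QQ Qu]; rewrite !preimage_chart_tangent_proj //.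
- exact (Lusin_frame_coord hn QQ hA A_Lusin).
- exact (Sierpinski_frame_coord hn u_unit QQ Qu hA A_Sierpinski).
Qed.
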